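(* Consider the multi-round profit license game with horizon $T$, stage costs $C_1,\dots,C_T>0$ and menus $\mathcal{F}_1,\dots,\mathcal{F}_T$. (i) If $\mathcal{F}_t\subseteq\mathcal{E}$ for every $t=1,\dots,T$, then the multi-round contract is incentive-aligned: for every $\theta_0\in\Theta_0$ and every agent strategy, $\mathbb{E}_{\theta_0}[L+P-C]\le 0$. (ii) Conversely, if $\mathcal{F}_t\not\subseteq\mathcal{E}$ for some $t$, then there exist $\theta_0\in\Theta_0$ and an agent strategy with $\mathbb{E}_{\theta_0}[L+P-C]>0$, so the contract is not incentive-aligned.
   Context: Let $\Theta=\Theta_0\sqcup\Theta_1$ be a set of types (null and nonnull) and $(P_\theta)_{\theta\in\Theta}$ probability distributions on a measurable space $\mathcal{Z}$. An $e$-value is a measurable $g:\mathcal{Z}\to[0,\infty)$ with $\mathbb{E}_{Z\sim P_\theta}[g(Z)]\le 1$ for every $\theta\in\Theta_0$; $\mathcal{E}$ is the set of $e$-values. Multi-round profit license game for an agent of type $\theta$: fix $T\ge1$, costs $C_1,\dots,C_T>0$, and menus $\mathcal{F}_1,\dots,\mathcal{F}_T$ of measurable functions $\mathcal{Z}\to[0,\infty)$. Set $L(0)=0$. For $t=1,\dots,T$: the agent chooses a withdrawal $P(t)\in[0,L(t-1)]$ and an indicator $I_t\in\{0,1\}$. If $I_t=1$, the agent pays $C_t$, chooses $f_t\in\mathcal{F}_t$, a fresh observation $Z_t\sim P_\theta$ independent of everything before is drawn, and $L(t)=(L(t-1)+C_t-P(t))\,f_t(Z_t)$. If $I_t=0$,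 $L(t)=L(t-1)-P(t)$. An agent strategy specifies $P(t)$, $I_t$ and $f_t$ as (measurable) functions of the history $(P(s),I_s,f_s,Z_s)_{s<t}$. The totals are $L=L(T)$, $P=\sum_{t=1}^T P(t)$ and $C=\sum_{t=1}^T C_tI_t$; $\mathbb{E}_\theta$ denotes expectation when the agent has type $\theta$. The multi-round contract is incentive-aligned if $\mathbb{E}_{\theta_0}[L+P-C]\le 0$ for every $\theta_0\in\Theta_0$ and every agent strategy. *)

From HB Require Import structures.
From mathcomp Require Import all_boot all_order all_algebra.
From mathcomp Require Import all_classical all_reals all_analysis.
Set Implicit Arguments. Unset Strict Implicit. Unset Printing Implicit Defensive.
Import Order.TTheory GRing.Theory Num.Theory.
Local Open Scope classical_set_scope.
Local Open Scope ring_scope.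

Section ProfitLicense.
Context (d : measure_display) (Z : measurableType d) (R : realType).
Context (Theta : Type) (Theta0 : set Theta) (Pr : Theta -> probability Z R).

Definition evalue (g : Z -> R) : Prop :=
  [/\ measurable_fun setT g, (forall z, 0 <= g z) &
      forall th, Theta0 th -> (\int[Pr th]_z (g z)%:E <= 1)%E].

(* The argument [t] is the round (1-based),
   the argument [obs : seq Z] is the list of observations Z_s drawn so far
   (only in rounds s < t with I_s = 1, in order).  Since P(s), I_s, f_s for
   s < t are themselves functions of earlier observations, this is exactly
   the information in the history (P(s), I_s, f_s, Z_s)_{s<t}.
   wd t obs = P(t), play t obs = I_t, pick t obs = f_t. *)
Record strategy := Strategy {
  wd : nat -> seq Z -> R;
  play : nat -> seq Z -> bool;
  pick : nat -> seq Z -> Z -> R }.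

Definition strategy_measurable (S : strategy) : Prop :=
  forall (t k : nat),
    [/\ measurable_fun setT (fun x : k.-tuple Z => wd S t (tval x)),
        measurable_fun setT (fun x : k.-tuple Z => play S t (tval x)) &
        measurable_fun setT (fun xz : k.-tuple Z * Z => pick S t (tval xz.1) xz.2)].

Context (C : nat -> R) (F : nat -> set (Z -> R)).

(* Feasibility along every reachable history: P(t) in [0, L(t-1)], and
   f_t in F_t whenever I_t = 1.  [n] = number of remaining rounds,
   [t] = current round, [L] = L(t-1). *)
Fixpoint feasible (S : strategy) (n t : nat) (obs : seq Z) (L : R) : Prop :=
  match n with
  | 0 => True
  | n'.+1 =>
    let p := wd S t obs in
    (0 <= p <= L) /\
    (if play S t obs then
       F t (pick S t obs) /\
       forall z, feasible S n' t.+1 (rcons obs z) ((L + C t - p) * pick S t obs z)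
     else feasible S n' t.+1 obs (L - p))
  end.

(* Expectation E_theta[phi(L, P, C)] of a nonnegative terminal quantity,
   computed by integrating out each fresh observation Z_t ~ P_theta
   (independent of the past) at the round where it is drawn.
   [L] = L(t-1), [Pa] = sum_{s<t} P(s), [Ca] = sum_{s<t} C_s I_s. *)
Fixpoint gameE (phi : R -> R -> R -> R) (th : Theta) (S : strategy)
    (n t : nat) (obs : seq Z) (L Pa Ca : R) : \bar R :=
  match n with
  | 0 => (phi L Pa Ca)%:E
  | n'.+1 =>
    let p := wd S t obs in
    if play S t obs then
      (\int[Pr th]_z gameE phi th S n' t.+1 (rcons obs z)
          ((L + C t - p) * pick S t obs z)%R (Pa + p)%R (Ca + C t)%R)%E
    else gameE phi th S n' t.+1 obs (L - p) (Pa + p) Ca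
  end.

Definition admissible (T : nat) (S : strategy) : Prop :=
  strategy_measurable S /\ feasible S T 1 [::] 0.

(* E_theta[L + P - C] = E_theta[L + P] - E_theta[C]  (C is bounded, L + P >= 0) *)
Definition expected_gain (T : nat) (th : Theta) (S : strategy) : \bar R :=
  (gameE (fun L Pa _ => (L + Pa)%R) th S T 1 [::] 0%R 0%R 0%R
   - gameE (fun _ _ Ca => Ca) th S T 1 [::] 0%R 0%R 0%R)%E.

End ProfitLicense.

From Pilot Require Import Defs.
From HB Require Import structures.
From mathcomp Require Import all_boot all_order all_algebra.
From mathcomp Require Import all_classical all_reals all_analysis.
From mathcomp Require Import measurable_realfun lra.
Set Implicit Arguments.
Unset Strict Implicit.
Unset Printing Implicit Defensive.

Import Order.TTheory GRing.Theory Num.Theory.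
Local Open Scope classical_set_scope.
Local Open Scope ring_scope.

(* (i) A played round turns the stake L + C - P into (L + C - P) f(Z), whose
   null expectation is at most the stake because f is an e-value; so the
   expected increase of L + P over one round is at most the fee C paid.
   Backward induction over the rounds gives E[L + P] <= E[C].
   (ii) If f in F_t satisfies E_theta0[f] > 1, the agent who withdraws
   nothing and plays only round t, with f, gains C_t (E_theta0[f] - 1) > 0. *)

Section integral_lemmas.
Context d (Z : measurableType d) (R : realType).

Lemma measurable_fun_integral_snd d' (X : measurableType d')
    (P : probability Z R) (h : X * Z -> \bar R) :
  measurable_fun setT h -> measurable_fun setT (fun x => \int[P]_y h (x, y))%E.
Proof.
move=> mh; rewrite (_ : (fun x => _) =
    (fun x => fubini_F P h^\+ x - fubini_F P h^\- x)%E); last first.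
  apply/funext => x; rewrite integralE /fubini_F.
  by congr (_ - _)%E; apply: eq_integral => y _; rewrite ?funeposE ?funenegE.
apply: emeasurable_funB; apply: measurable_fun_fubini_tonelli_F.
- exact: measurable_funepos.
- by move=> ?; exact: funepos_ge0.
- exact: measurable_funeneg.
- by move=> ?; exact: funeneg_ge0.
Qed.

Lemma integral_cst_probability (P : probability Z R) (c : R) :
  (\int[P]_z c%:E = c%:E)%E.
Proof.
rewrite -[LHS]/(\int[P]_z cst c%:E z)%E integral_cst //.
by rewrite [X in (_ * X)%E]probability_setT mule1.
Qed.

Lemma ge0_integralD_cst (P : probability Z R) (g : Z -> \bar R) (c : R) :
  (forall z, 0 <= g z)%E -> measurable_fun setT g -> 0 <= c ->
  (\int[P]_z (g z + c%:E) = \int[P]_z g z + c%:E)%E.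
Proof.
move=> g0 mg c0.
by rewrite ge0_integralD ?integral_cst_probability // => *; rewrite lee_fin.
Qed.

Lemma ge0_integral_step_le (P : probability Z R) (g h : Z -> \bar R)
    (f : Z -> R) (a b c : R) :
  measurable_fun setT g -> measurable_fun setT h -> measurable_fun setT f ->
  (forall z, 0 <= g z)%E -> (forall z, 0 <= h z)%E -> (forall z, 0 <= f z) ->
  (\int[P]_z (f z)%:E <= 1)%E -> 0 <= a -> 0 <= b -> 0 <= c ->
  (forall z, g z + c%:E <= h z + (a * f z + b)%:E)%E ->
  (\int[P]_z g z + c%:E <= \int[P]_z h z + (a + b)%:E)%E.
Proof.
move=> mg mh mf g0 h0 f0 Ef1 a0 b0 c0 ghf.
have af0 z : 0 <= a * f z by exact: mulr_ge0.
have maf : measurable_fun setT (fun z => (a * f z)%:E).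
  by apply/measurable_EFinP; exact: measurable_funM.
have mafb : measurable_fun setT (fun z => (a * f z + b)%:E).
  by apply/measurable_EFinP; apply: measurable_funD => //; exact/measurable_EFinP.
have Eaf : (\int[P]_z (a * f z + b)%:E <= (a + b)%:E)%E.
  under eq_integral do rewrite EFinD.
  rewrite ge0_integralD_cst // EFinD.
  apply: leeD2r; under eq_integral do rewrite EFinM.
  rewrite ge0_integralZl_EFin //;
    [|by move=> z _; rewrite lee_fin|exact/measurable_EFinP].
  by rewrite -[leRHS]mule1; apply: lee_wpmul2l; rewrite ?lee_fin.
rewrite -ge0_integralD_cst //.
apply: (@le_trans _ _ (\int[P]_z (h z + (a * f z + b)%:E))%E).
  apply: ge0_le_integral => //.
  - by move=> z _; apply: adde_ge0; rewrite ?lee_fin.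
  - by apply: emeasurable_funD => //; exact: measurable_cst.
  - exact: emeasurable_funD.
rewrite ge0_integralD //; first exact: leeD2l.
by move=> z _; rewrite lee_fin addr_ge0.
Qed.

Lemma measurable_rcons_tuple d' (X : measurableType d') k (o : X -> k.-tuple Z) :
  measurable_fun setT o ->
  measurable_fun setT (fun xz : X * Z => [tuple of rcons (o xz.1) xz.2]).
Proof.
move=> mo; apply/measurable_fun_tnthP => i /=.
have [ik|ik] := ltnP i k.
  rewrite (_ : _ \o _ = fun xz : X * Z => tnth (o xz.1) (Ordinal ik)).
    apply: (measurableT_comp (measurable_tnth _)).
    exact: measurableT_comp mo measurable_fst.
  by apply/funext => xz /=; rewrite !(tnth_nth xz.2) /= nth_rcons size_tuple ik.
rewrite (_ : _ \o _ = snd) //.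
apply/funext => xz /=; rewrite (tnth_nth xz.2) /= nth_rcons size_tuple.
have -> : nat_of_ord i = k by apply/eqP; rewrite eqn_leq ik -ltnS ltn_ord.
by rewrite ltnn eqxx.
Qed.

End integral_lemmas.

Section game.
Context d (Z : measurableType d) (R : realType) (Theta : Type)
  (Pr : Theta -> probability Z R) (C : nat -> R).

Definition measurable_payoff (phi : R -> R -> R -> R) : Prop :=
  forall d' (X : measurableType d') (a b c : X -> R),
    measurable_fun setT a -> measurable_fun setT b -> measurable_fun setT c ->
    measurable_fun setT (fun x => phi (a x) (b x) (c x)).

Definition wealth : R -> R -> R -> R := fun L Pa _ => L + Pa.
Definition cost : R -> R -> R -> R := fun _ _ Ca => Ca.

Lemma measurable_payoff_wealth : measurable_payoff wealth.
Proof. by move=> d' X a b c ma mb _; exact: measurable_funD. Qed.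

Lemma measurable_payoff_cost : measurable_payoff cost.
Proof. by move=> d' X a b c _ _. Qed.

Section measurable_gameE.
Variables (phi : R -> R -> R -> R) (th : Theta) (S : strategy Z R).
Hypotheses (mphi : measurable_payoff phi) (mS : strategy_measurable S).

(* The history is generalized to a measurable family of k-tuples so that the
   induction hypothesis applies to the history extended by the fresh draw. *)
Lemma measurable_gameE n t k d' (X : measurableType d') (o : X -> k.-tuple Z)
    (L Pa Ca : X -> R) :
  measurable_fun setT o -> measurable_fun setT L -> measurable_fun setT Pa ->
  measurable_fun setT Ca ->
  measurable_fun setT
    (fun x => gameE Pr C phi th S n t (tval (o x)) (L x) (Pa x) (Ca x)).
Proof.
elim: n t k d' X o L Pa Ca => [|n IH] t k d' X o L Pa Ca mo mL mPa mCa /=.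
  exact/measurable_EFinP/mphi.
have [mw mplay mpick] := mS t k.
have mp : measurable_fun setT (fun x => wd S t (tval (o x))).
  exact: measurableT_comp mw mo.
have m1 (Y : X -> R) : measurable_fun setT Y ->
    measurable_fun setT (fun xz : X * Z => Y xz.1).
  by move=> mY; exact: measurableT_comp mY measurable_fst.
apply: measurable_fun_ifT; first exact: measurableT_comp mplay mo.
  pose p x := wd S t (tval (o x)).
  apply: (@measurable_fun_integral_snd _ _ _ _ _ (Pr th) (fun xz =>
    gameE Pr C phi th S n t.+1 (tval [tuple of rcons (o xz.1) xz.2])
    ((L xz.1 + C t - p xz.1) * Defs.pick S t (tval (o xz.1)) xz.2)
    (Pa xz.1 + p xz.1) (Ca xz.1 + C t))).
  apply: IH; first exact: measurable_rcons_tuple.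
  - apply: measurable_funM; first by apply: measurable_funB;
      [apply: measurable_funD => //; exact: m1|exact: m1].
    have mo1 : measurable_fun setT (fun xz : X * Z => o xz.1).
      exact: measurableT_comp mo measurable_fst.
    exact: measurableT_comp mpick (measurable_fun_pair mo1 measurable_snd).
  - by apply: measurable_funD; exact: m1.
  - by apply: measurable_funD => //; exact: m1.
by apply: IH => //; [exact: measurable_funB|exact: measurable_funD].
Qed.

Lemma measurable_gameE_rcons n t obs (a : R) (f : Z -> R) (Pa Ca : R) :
  measurable_fun setT f ->
  measurable_fun setT
    (fun z => gameE Pr C phi th S n t (rcons obs z) (a * f z) Pa Ca).
Proof.
move=> mf; pose o z : (size obs).+1.-tuple Z := [tuple of rcons (in_tuple obs) z].
have mo : measurable_fun setT o.
  have mcst := measurable_rcons_tuple (measurable_cst (T1 := Z) (in_tuple obs)).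
  have mdiag :=
    measurable_fun_pair (@measurable_id _ Z setT) (@measurable_id _ Z setT).
  exact: measurableT_comp mcst mdiag.
exact: measurable_gameE mo (measurable_funM (measurable_cst a) mf)
  (measurable_cst _) (measurable_cst _).
Qed.

End measurable_gameE.

Section null_rounds.
Variable F : nat -> set (Z -> R).

Definition null_rounds (th : Theta) (n t : nat) : Prop :=
  forall s, (t <= s < t + n)%N -> 0 <= C s /\ F s `<=` evalue [set th] Pr.

Lemma null_roundsS th n t : null_rounds th n.+1 t ->
  [/\ 0 <= C t, F t `<=` evalue [set th] Pr & null_rounds th n t.+1].
Proof.
move=> nr; have [|C0 Fe] := nr t; first by rewrite leqnn addnS ltnS leq_addr.
split => // s /andP[ts sn]; apply: nr.
by rewrite (ltnW ts) addnS -addSn.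
Qed.

Lemma gameE_ge0 (phi : R -> R -> R -> R) th (S : strategy Z R) :
  (forall a b c, 0 <= a -> 0 <= b -> 0 <= c -> 0 <= phi a b c) ->
  forall n t obs L Pa Ca, null_rounds th n t -> feasible C F S n t obs L ->
  0 <= L -> 0 <= Pa -> 0 <= Ca -> (0 <= gameE Pr C phi th S n t obs L Pa Ca)%E.
Proof.
move=> phi0; elim=> [|n IH] t obs L Pa Ca + /= feas L0 Pa0 Ca0.
  by move=> _; rewrite lee_fin; exact: phi0.
move=> /null_roundsS[C0 Fe nr]; case: feas => /andP[p0 pL].
case: (play S t obs) => [[/Fe[_ f0 _] feas]|feas].
  apply: integral_ge0 => z _; apply: IH => //; try lra.
  by apply: mulr_ge0 => //; lra.
by apply: IH => //; lra.
Qed.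

Lemma gameE_wealth_le th (S : strategy Z R) : strategy_measurable S ->
  forall n t obs L Pa Ca, null_rounds th n t -> feasible C F S n t obs L ->
  0 <= L -> 0 <= Pa -> 0 <= Ca ->
  (gameE Pr C wealth th S n t obs L Pa Ca + Ca%:E <=
   gameE Pr C cost th S n t obs L Pa Ca + (L + Pa)%:E)%E.
Proof.
move=> mS; elim=> [|n IH] t obs L Pa Ca + /= feas L0 Pa0 Ca0.
  by move=> _; rewrite -!EFinD lee_fin addrC.
move=> /null_roundsS[C0 Fe nr]; case: feas => /andP[p0 pL].
case: (play S t obs) => [[/Fe[mf f0 Ef1] feas]|feas]; last first.
  have := IH t.+1 obs (L - wd S t obs) (Pa + wd S t obs) Ca nr feas.
  rewrite /wealth addrACA addNr addr0.
  by apply; lra.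
set p := wd S t obs in p0 pL feas *.
set f := Defs.pick S t obs in mf f0 Ef1 feas *.
have a0 : 0 <= L + C t - p by lra.
pose g phi z := gameE Pr C phi th S n t.+1 (rcons obs z) ((L + C t - p) * f z)
  (Pa + p) (Ca + C t).
have mg phi : measurable_payoff phi -> measurable_fun setT (g phi).
  by move=> mphi; exact: measurable_gameE_rcons.
have g0 phi : (forall a b c, 0 <= a -> 0 <= b -> 0 <= c -> 0 <= phi a b c) ->
    forall z, (0 <= g phi z)%E.
  move=> phi0 z; apply: gameE_ge0 => //; try lra; exact: mulr_ge0.
have step z : (g wealth z + (Ca + C t)%:E <=
    g cost z + ((L + C t - p) * f z + (Pa + p))%:E)%E.
  by apply: IH => //; try lra; exact: mulr_ge0.
have := ge0_integral_step_le (mg _ measurable_payoff_wealth)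
  (mg _ measurable_payoff_cost) mf (g0 wealth (fun a b _ a0 b0 _ => addr_ge0 a0 b0))
  (g0 cost (fun _ _ _ _ _ c0 => c0)) f0 (Ef1 th erefl) a0 (addr_ge0 Pa0 p0)
  (addr_ge0 Ca0 C0) step.
move: (\int[Pr th]_z g wealth z)%E (\int[Pr th]_z g cost z)%E => Iw Ic.
rewrite (_ : L + C t - p + (Pa + p) = L + Pa + C t); last by lra.
by rewrite (EFinD Ca) (EFinD (L + Pa)) !addeA leeD2rE.
Qed.

End null_rounds.
End game.

Section single_play.
Context d (Z : measurableType d) (R : realType) (Theta : Type)
  (Pr : Theta -> probability Z R) (C : nat -> R).
Variables (t0 : nat) (f : Z -> R).

Definition single_play : strategy Z R :=
  Strategy (fun _ _ => 0) (fun t _ => t == t0) (fun _ _ => f).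

Lemma single_play_measurable :
  measurable_fun setT f -> strategy_measurable single_play.
Proof.
move=> mf t k; split; try exact: measurable_cst.
exact: measurableT_comp mf measurable_snd.
Qed.

Lemma feasible_single_play (F : nat -> set (Z -> R)) :
  0 <= C t0 -> F t0 f -> (forall z, 0 <= f z) ->
  forall n t obs L, 0 <= L -> feasible C F single_play n t obs L.
Proof.
move=> C0 Ff f0; elim=> // n IH t obs L L0 /=; split; first by rewrite lexx.
case: eqP => [->|_]; last by apply: IH; lra.
by split => // z; apply: IH; apply: mulr_ge0 => //; lra.
Qed.

Lemma gameE_single_play_after phi th n t obs L Pa Ca : (t0 < t)%N ->
  gameE Pr C phi th single_play n t obs L Pa Ca = (phi L Pa Ca)%:E.
Proof.
elim: n t obs L Pa Ca => // n IH t obs L Pa Ca t0t /=.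
by rewrite gtn_eqF // IH ?subr0 ?addr0 // ltnW.
Qed.

Lemma gameE_single_play phi th n t obs L Pa Ca : (t <= t0 < t + n)%N ->
  gameE Pr C phi th single_play n t obs L Pa Ca =
  (\int[Pr th]_z (phi ((L + C t0) * f z) Pa (Ca + C t0))%:E)%E.
Proof.
elim: n t obs L Pa Ca => [|n IH] t obs L Pa Ca /andP[tt0 t0n] /=.
  by move: t0n; rewrite addn0 ltnNge tt0.
case: eqP => [->|/eqP t0t].
  by apply: eq_integral => z _; rewrite gameE_single_play_after // subr0 addr0.
by rewrite IH ?subr0 ?addr0 // ltn_neqAle t0t tt0 addSnnS.
Qed.

Lemma expected_gain_single_play T th : (1 <= t0 <= T)%N -> 0 <= C t0 ->
  measurable_fun setT f -> (forall z, 0 <= f z) ->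
  expected_gain Pr C T th single_play =
  ((C t0)%:E * \int[Pr th]_z (f z)%:E - (C t0)%:E)%E.
Proof.
move=> /andP[t01 t0T] C0 mf f0.
rewrite /expected_gain !gameE_single_play ?t01 ?add1n ?ltnS //=.
rewrite add0r integral_cst_probability -ge0_integralZl_EFin //.
- by congr (_ + _)%E; apply: eq_integral => z _; rewrite addr0 EFinM.
- by move=> z _; rewrite lee_fin.
- exact/measurable_EFinP.
Qed.

Lemma expected_gain_single_play_gt0 T th : (1 <= t0 <= T)%N -> 0 < C t0 ->
  measurable_fun setT f -> (forall z, 0 <= f z) ->
  (1 < \int[Pr th]_z (f z)%:E)%E -> (0 < expected_gain Pr C T th single_play)%E.
Proof.
move=> tT C0 mf f0; rewrite expected_gain_single_play // ?ltW //.
case: (\int[Pr th]_z (f z)%:E)%E => [r| |] // r1.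
  by rewrite -EFinM -EFinB lte_fin subr_gt0 -[ltLHS]mulr1 ltr_pM2l // -lte_fin.
by rewrite muleC gt0_mulye ?lte_fin // addye ?ltry.
Qed.

End single_play.

Lemma not_evalue_integral_gt1 d (Z : measurableType d) (R : realType) (Theta : Type)
    (Theta0 : set Theta) (Pr : Theta -> probability Z R) (f : Z -> R) :
  measurable_fun setT f -> (forall z, 0 <= f z) -> ~ evalue Theta0 Pr f ->
  exists2 th, Theta0 th & (1 < \int[Pr th]_z (f z)%:E)%E.
Proof.
move=> mf f0 nf; apply: contrapT => nex; apply: nf; split => // th th0.
by rewrite leNgt; apply/negP => lt1; apply: nex; exists th.
Qed.

Theorem propositionB1 (d : measure_display) (Z : measurableType d) (R : realType)
  (Theta : Type) (Theta0 : set Theta) (Pr : Theta -> probability Z R)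
  (T : nat) (C : nat -> R) (F : nat -> set (Z -> R))
  (hT : (1 <= T)%N)
  (hC : forall t, (1 <= t <= T)%N -> 0 < C t)
  (hF : forall t, (1 <= t <= T)%N -> forall f, F t f ->
          measurable_fun setT f /\ forall z, 0 <= f z) :
  ((forall t, (1 <= t <= T)%N -> F t `<=` evalue Theta0 Pr) ->
     forall th0, Theta0 th0 -> forall S : strategy Z R,
       admissible C F T S -> (expected_gain Pr C T th0 S <= 0)%E)
  /\
  ((exists t, (1 <= t <= T)%N /\ ~ (F t `<=` evalue Theta0 Pr)) ->
     exists th0, Theta0 th0 /\ exists S : strategy Z R,
       admissible C F T S /\ (0 < expected_gain Pr C T th0 S)%E).
Proof.
split.
- move=> hE th0 th00 S [mS feas].
  have nr : null_rounds Pr C F th0 T 1.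
    move=> s /andP[s1]; rewrite add1n ltnS => sT.
    have sT' : (1 <= s <= T)%N by rewrite s1.
    split; first exact/ltW/hC.
    by move=> f /(hE s sT')[mf f0 Ef]; split => // th /= ->; exact: Ef.
  have := gameE_wealth_le mS nr feas (lexx 0) (lexx 0) (lexx 0).
  by rewrite /expected_gain sube_le0 adde0 addr0 adde0.
- move=> [t0 [tT /nonsubset[f [Ff nf]]]].
  have [mf f0] := hF t0 tT f Ff.
  have [th th0 Ef] := not_evalue_integral_gt1 mf f0 nf.
  exists th; split => //; exists (single_play t0 f); split.
    split; first exact: single_play_measurable.
    by apply: feasible_single_play => //; exact/ltW/hC.
  exact: expected_gain_single_play_gt0 (hC t0 tT) mf f0 Ef.
Qed.
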